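(* Let $G\leq\operatorname{Homeo}(\mathfrak{C})$. If $G$ is vigorous then $G$ is lawless, i.e., there is no non-trivial freely reduced word $w$ in letters $x_1^{\pm1},\dots,x_j^{\pm 1}$ such that $w(g_1,\dots,g_j)=1_G$ for all $(g_1,\dots,g_j)\in G^j$.
   Context: $\mathfrak{C}$ denotes a Cantor space (a space homeomorphic to $\{0,1\}^\omega$). For $\gamma\in\operatorname{Homeo}(\mathfrak{C})$, $\operatorname{supp}(\gamma)=\{p\in\mathfrak{C}: p\gamma\neq p\}$ (right actions). A subset $S\subseteq \operatorname{Homeo}(\mathfrak{C})$ is vigorous if for all clopen $A,B,C\subseteq\mathfrak{C}$ with $B,C$ non-empty proper subsets of $A$ there is $\gamma\in S$ with $\operatorname{supp}(\gamma)\subseteq A$ and $B\gamma\subseteq C$. *)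

From HB Require Import structures.
From mathcomp Require Import all_boot all_order all_algebra.
From mathcomp Require Import all_classical all_reals all_analysis.
Set Implicit Arguments. Unset Strict Implicit. Unset Printing Implicit Defensive.
Local Open Scope classical_set_scope.

Notation Cantor := cantor_space.

Record homeo := Homeo {
  hfun : Cantor -> Cantor;
  hinv : Cantor -> Cantor;
  hfunK : cancel hfun hinv;
  hinvK : cancel hinv hfun;
  hfun_cont : continuous hfun;
  hinv_cont : continuous hinv }.

Definition id_homeo : homeo :=
  @Homeo id id (fun _ => erefl) (fun _ => erefl)
    (fun x => cvg_id) (fun x => cvg_id).

Lemma mul_homeo_K (g h : homeo) : cancel (hfun h \o hfun g) (hinv g \o hinv h).
Proof. by move=> x /=; rewrite (@hfunK h) (@hfunK g). Qed.
Lemma mul_homeo_KV (g h : homeo) : cancel (hinv g \o hinv h) (hfun h \o hfun g).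
Proof. by move=> x /=; rewrite (@hinvK g) (@hinvK h). Qed.
Lemma mul_homeo_c1 (g h : homeo) : continuous (hfun h \o hfun g).
Proof. by move=> x; apply: continuous_comp; apply: hfun_cont. Qed.
Lemma mul_homeo_c2 (g h : homeo) : continuous (hinv g \o hinv h).
Proof. by move=> x; apply: continuous_comp; apply: hinv_cont. Qed.

(* Right actions: p (g h) = (p g) h, so the product g h is "first g, then h". *)
Definition mul_homeo (g h : homeo) : homeo :=
  @Homeo (hfun h \o hfun g) (hinv g \o hinv h) (@mul_homeo_K g h)
    (@mul_homeo_KV g h) (@mul_homeo_c1 g h) (@mul_homeo_c2 g h).

Definition inv_homeo (g : homeo) : homeo :=
  @Homeo (hinv g) (hfun g) (@hinvK g) (@hfunK g) (@hinv_cont g) (@hfun_cont g).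

Definition is_subgroup (G : set homeo) : Prop :=
  [/\ G id_homeo,
      (forall g h, G g -> G h -> G (mul_homeo g h)) &
      (forall g, G g -> G (inv_homeo g))].

Definition supp (g : homeo) : set Cantor := [set p | hfun g p <> p].

Definition vigorous (S : set homeo) : Prop :=
  forall A B C : set Cantor, clopen A -> clopen B -> clopen C ->
    B !=set0 -> C !=set0 -> B `<` A -> C `<` A ->
    exists2 g, S g & (supp g `<=` A /\ hfun g @` B `<=` C).

(* Words in the letters x_1^{+-1}, ..., x_j^{+-1}: a letter (i, b) stands for
   x_i if b = true and x_i^{-1} if b = false. *)
Definition letter (j : nat) := ('I_j * bool)%type.

(* freely reduced: no two adjacent letters x_i^e x_i^{-e} *)
Definition freely_reduced j (w : seq (letter j)) : bool :=
  sorted (fun a b : letter j => ~~ ((a.1 == b.1) && (a.2 != b.2))) w.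

Definition eval_letter j (gs : 'I_j -> homeo) (a : letter j) : homeo :=
  if a.2 then gs a.1 else inv_homeo (gs a.1).

Definition eval_word j (gs : 'I_j -> homeo) (w : seq (letter j)) : homeo :=
  foldl (fun acc a => mul_homeo acc (eval_letter gs a)) id_homeo w.

Definition is_identity (g : homeo) : Prop := hfun g = id.

Definition lawless (G : set homeo) : Prop :=
  forall (j : nat) (w : seq (letter j)), freely_reduced w -> w <> [::] ->
    ~ (forall gs : 'I_j -> homeo, (forall i, G (gs i)) ->
         is_identity (eval_word gs w)).

From mathcomp Require Import all_boot all_order all_algebra.
From mathcomp Require Import all_classical all_reals all_analysis.
From mathcomp Require Import zify.
Set Implicit Arguments. Unset Strict Implicit. Unset Printing Implicit Defensive.

(* Proof strategy: a ping-pong argument.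
   1. Abstract ping-pong lemma: if each letter a of a free alphabet carries a
      set X a, the sets X a being pairwise disjoint, and a map f a sends the
      complement of X a^-1 into X a, then along a freely reduced word every
      point outside X (first letter)^-1 is carried into X (last letter).  Hence
      a point lying in no X a is moved by every non-empty reduced word.
   2. In the Cantor space the sets "first 1 at position m" are pairwise
      disjoint, non-empty clopen sets, none of which contains the zero
      sequence; letter (i, e) is assigned the set with m = 2 i + e.
   3. Vigour (applied with A the whole space) provides for every i some g_i in
      G mapping the complement of X(x_i^-1) into X(x_i); then g_i^-1 maps the
      complement of X(x_i) into X(x_i^-1), so the g_i play ping-pong.
   4. A word w vanishing identically on G would fix the zero sequence when
      evaluated at (g_1, ..., g_j), contradicting step 1. *)

Local Open Scope classical_set_scope.

Definition inv_letter j (a : letter j) : letter j := (a.1, ~~ a.2).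

Definition reduced_step j (a b : letter j) : bool :=
  ~~ ((a.1 == b.1) && (a.2 != b.2)).

Lemma reduced_step_inv j (a b : letter j) : reduced_step a b -> a <> inv_letter b.
Proof.
case: a b => [i e] [i' e']; rewrite /reduced_step /inv_letter /= => ab [ii' ee'].
by move: ab; rewrite ii' ee' eqxx; case: (e').
Qed.

Lemma eval_word_foldl j (gs : 'I_j -> homeo) (w : seq (letter j)) (acc : homeo)
    (p : Cantor) :
  hfun (foldl (fun acc a => mul_homeo acc (eval_letter gs a)) acc w) p =
  foldl (fun q a => hfun (eval_letter gs a) q) (hfun acc p) w.
Proof. by elim: w acc p => [|a w IHw] acc p //=; rewrite IHw. Qed.

Lemma eval_wordE j (gs : 'I_j -> homeo) (w : seq (letter j)) (p : Cantor) :
  hfun (eval_word gs w) p = foldl (fun q a => hfun (eval_letter gs a) q) p w.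
Proof. exact: eval_word_foldl. Qed.

Section PingPong.
Variables (T : Type) (j : nat) (X : letter j -> set T) (f : letter j -> T -> T).
Hypothesis X_disjoint : forall a b x, X a x -> X b x -> a = b.
Hypothesis f_pingpong : forall a q, ~ X (inv_letter a) q -> X a (f a q).

Let act (w : seq (letter j)) (q : T) : T := foldl (fun q a => f a q) q w.

Lemma pingpong_path (w : seq (letter j)) (a : letter j) (q : T) :
  path (@reduced_step j) a w -> ~ X (inv_letter a) q ->
  X (last a w) (act (a :: w) q).
Proof.
elim: w a q => [|b w IHw] a q /=; first by move=> _; exact: f_pingpong.
move=> /andP[ab bw] qa; apply: (IHw b _ bw) => fq_b.
exact/(reduced_step_inv ab)/(X_disjoint (f_pingpong qa) fq_b).
Qed.

Lemma pingpong_moves (w : seq (letter j)) (p : T) :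
  freely_reduced w -> w <> [::] -> (forall a, ~ X a p) -> act w p <> p.
Proof.
case: w => [//|a w] red _ outside fix_p.
by apply: (outside (last a w)); rewrite -[in X _ p]fix_p; exact: pingpong_path.
Qed.

End PingPong.

Lemma clopen_coord (k : nat) (b : bool) : clopen [set x : Cantor | x k = b].
Proof.
have -> : [set x : Cantor | x k = b] = proj k @^-1` [set b] by [].
apply: preimage_clopen; last exact: proj_continuous.
by split; [exact: discrete_open | exact: discrete_closed].
Qed.

Fixpoint zero_prefix (m : nat) : set Cantor :=
  if m is m'.+1 then zero_prefix m' `&` [set x | x m' = false] else setT.

Lemma zero_prefixP (m : nat) (x : Cantor) :
  zero_prefix m x <-> forall k, (k < m)%N -> x k = false.
Proof.
elim: m => [|m IHm] /=; first by split.
rewrite IHm; split => [[xlt xm] k|xlt]; last by split=> [k km|]; apply: xlt; lia.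
by rewrite ltnS leq_eqVlt => /orP[/eqP->|]; [exact: xm | exact: xlt].
Qed.

Definition first_one (m : nat) : set Cantor := zero_prefix m `&` [set x | x m = true].

Lemma clopen_first_one (m : nat) : clopen (first_one m).
Proof.
apply: clopenI (clopen_coord _ _).
by elim: m => [|m IHm] /=; [exact: clopenT | exact: clopenI IHm (clopen_coord _ _)].
Qed.

Lemma first_one_disjoint (m n : nat) (x : Cantor) :
  first_one m x -> first_one n x -> m = n.
Proof.
wlog mn : m n / (m <= n)%N => [wlog_mn xm xn|].
  by case: (leqP m n) => [mn|/ltnW nm]; [exact: wlog_mn | exact/esym/(wlog_mn n m)].
move=> [_ xm] [/zero_prefixP xn _]; apply/eqP; rewrite eqn_leq mn leqNgt.
by apply/negP => /xn; rewrite xm.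
Qed.

Lemma first_one_indicator (m : nat) : first_one m (fun k => k == m).
Proof.
split=> /=; last exact: eqxx.
by apply/zero_prefixP => k km; apply/negbTE; rewrite neq_ltn km.
Qed.

Lemma first_one_zero (m : nat) : ~ first_one m (fun _ => false).
Proof. by case. Qed.

Definition letter_set j (a : letter j) : set Cantor := first_one (2 * a.1 + a.2).

Lemma letter_set_disjoint j (a b : letter j) (x : Cantor) :
  letter_set a x -> letter_set b x -> a = b.
Proof.
move=> /first_one_disjoint/[apply]; case: a b => [i e] [i' e'] /=.
by case: e; case: e' => /= h; first [lia | congr pair; apply: val_inj => /=; lia].
Qed.

Lemma vigorous_swap (S : set homeo) (U V : set Cantor) :
  vigorous S -> clopen U -> clopen V -> U !=set0 -> ~` U !=set0 ->
  V !=set0 -> ~` V !=set0 ->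
  exists2 g, S g & forall q, ~ U q -> V (hfun g q).
Proof.
move=> vig clU clV [u Uu] nU neV [v nVv].
have [||g Sg [_ gUV]] := vig setT (~` U) V clopenT (clopenC set0 clU) clV nU neV.
- by split=> // /(_ u I).
- by split=> // /(_ v I).
by exists g => // q nUq; apply: gUV; exists q.
Qed.

Lemma hinv_swap (g : homeo) (U V : set Cantor) :
  (forall q, ~ U q -> V (hfun g q)) -> forall q, ~ V q -> U (hinv g q).
Proof. by move=> gUV q nVq; apply: contrapT => /gUV; rewrite hinvK. Qed.

Theorem theorem1p2 (G : set homeo) :
  is_subgroup G -> vigorous G -> lawless G.
Proof.
move=> _ vig j w red wne law.
pose zero : Cantor := fun _ => false.
have zero_out m : ~ first_one m zero by exact: first_one_zero.
have players (i : 'I_j) : exists g, G g /\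
    forall q, ~ letter_set (i, false) q -> letter_set (i, true) (hfun g q).
  have [||||g Gg gUV] := vigorous_swap vig (clopen_first_one (2 * i + false))
    (clopen_first_one (2 * i + true)).
  - by eexists; exact: first_one_indicator.
  - by exists zero; exact: zero_out.
  - by eexists; exact: first_one_indicator.
  - by exists zero; exact: zero_out.
  by exists g.
have [gs gsP] := choice players.
have pingpong (a : letter j) q :
    ~ letter_set (inv_letter a) q -> letter_set a (hfun (eval_letter gs a) q).
  by case: a => i [] /=; have [_ gi] := gsP i; [exact: gi | exact: hinv_swap].
apply: (pingpong_moves (@letter_set_disjoint j) pingpong red wne (fun a => zero_out _)).
by rewrite -eval_wordE law // => i; have [] := gsP i.
Qed.
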